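(* Let $G$ be a finite abelian group and $\pi$ a permutation of $G\setminus\{\epsilon\}$ satisfying (i) $\pi^3=\mathrm{id}$, (ii) $\pi(x)^{-1}=\pi^{-1}(x^{-1})$ for all $x\neq\epsilon$, and (iii) $\pi(st)=\pi(t)\,\pi\bigl(\pi(s)^{-1}\pi(t^{-1})\bigr)$ for all non-identity $s,t$ with $s\ne t^{-1}$. Then there is an element $\omega\in G$ such that $s\,\pi(s)\,\pi^{-1}(s)=\omega$ for every $s\in G\setminus\{\epsilon\}$, and $\omega^2=\epsilon$.
   Context: $\epsilon$ denotes the identity element of $G$; $G$ is written multiplicatively. *)

From mathcomp Require Import all_boot all_fingroup.
Set Implicit Arguments.
Unset Strict Implicit.
Unset Printing Implicit Defensive.

From mathcomp Require Import all_boot all_fingroup.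

Set Implicit Arguments.
Unset Strict Implicit.
Unset Printing Implicit Defensive.

Local Open Scope group_scope.

(* Since pi^3 = 1, w(x) := x * pi x * pi^-1 x is the product over the pi-orbit
   of x.  Rewritten with the relations pi^2 = pi^-1 and pi(x^-1) = (pi^-1 x)^-1,
   the functional equation applied to the three pairs (s, t), (pi t, pi^-1 s)
   and (pi^-1 s, pi t) expresses pi t and pi^-1 t through pi (s t) and
   pi^-1 (s t), and the result is w(t) = w(s t).  As left translations act
   transitively, w is constant on G \ {1}; since w(x^-1) = w(x)^-1, its value
   is an involution. *)

Section TriplePermutation.

Variables (gT : finGroupType) (pi : {perm gT}).
Hypothesis Gab : abelian [set: gT].
Hypothesis pi1 : pi 1 = 1.
Hypothesis pi3 : forall x : gT, x != 1 -> pi (pi (pi x)) = x.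
Hypothesis pi_invV : forall x : gT, x != 1 -> (pi x)^-1 = (pi^-1)%g (x^-1).
Hypothesis pi_mul : forall s t : gT, s != 1 -> t != 1 -> s != t^-1 ->
  pi (s * t) = pi t * pi ((pi s)^-1 * pi (t^-1)).

Local Notation piV := (pi^-1)%g.

Lemma mulgC (x y : gT) : x * y = y * x.
Proof. by apply: (centsP Gab); rewrite inE. Qed.

Lemma piV1 : piV 1 = 1.
Proof. by rewrite -{1}pi1 permK. Qed.

Lemma pi_eq1 x : (pi x == 1) = (x == 1).
Proof. by rewrite -{1}pi1 (inj_eq perm_inj). Qed.

Lemma piV_eq1 x : (piV x == 1) = (x == 1).
Proof. by rewrite -{1}piV1 (inj_eq perm_inj). Qed.

Lemma pi_invg x : pi x^-1 = (piV x)^-1.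
Proof.
have [->|nx] := eqVneq x 1; first by rewrite invg1 piV1 pi1 invg1.
by rewrite -[pi x^-1]invgK pi_invV ?invgK // eq_invg1.
Qed.

Lemma piV_invg x : piV x^-1 = (pi x)^-1.
Proof. by apply: (@perm_inj _ pi); rewrite permKV pi_invg permK. Qed.

Lemma pi2 x : pi (pi x) = piV x.
Proof.
have [->|nx] := eqVneq x 1; first by rewrite pi1 pi1 piV1.
by rewrite -{2}(pi3 nx) permK.
Qed.

Lemma piV2 x : piV (piV x) = pi x.
Proof. by rewrite -(pi2 (piV x)) permKV. Qed.

Lemma pi_mulg s t : s != 1 -> t != 1 -> s * t != 1 ->
  pi (s * t) = pi t * (piV (pi s * piV t))^-1.
Proof.
move=> ns nt nst.
have nst' : s != t^-1 by apply: contra nst => /eqP ->; rewrite mulVg.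
by rewrite pi_mul // pi_invg -invMg (mulgC (piV t)) pi_invg.
Qed.

Definition orbit_prod x := x * pi x * piV x.

Lemma orbit_prodV x : orbit_prod x^-1 = (orbit_prod x)^-1.
Proof.
rewrite /orbit_prod pi_invg piV_invg !invMg.
by rewrite (mulgC (piV x)^-1) -mulgA (mulgC (piV x)^-1) mulgA (mulgC x^-1).
Qed.

Lemma orbit_prodM s t : s != 1 -> t != 1 -> s * t != 1 ->
  orbit_prod (s * t) = orbit_prod t.
Proof.
move=> ns nt nst.
have nVs : piV s != 1 by rewrite piV_eq1.
have nPt : pi t != 1 by rewrite pi_eq1.
have nVsPt : piV s * pi t != 1.
  apply: contra nst; rewrite -[pi t]invgK -eq_mulgV1 -piV_invg (inj_eq perm_inj).
  by move=> /eqP ->; rewrite mulVg.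
set a := piV (pi s * piV t).
have Epi : pi t = pi (s * t) * a by rewrite pi_mulg // mulgKV.
have EpiV : piV t = s * a^-1 * piV (s * t).
  have nPtVs : pi t * piV s != 1 by rewrite mulgC.
  have EPtVs := pi_mulg nPt nVs nPtVs.
  have EVsPt := pi_mulg nVs nPt nVsPt.
  rewrite pi2 piV2 permKV (mulgC (piV t)) -/a in EPtVs.
  rewrite pi2 permKV permK mulgC EPtVs in EVsPt.
  by rewrite EVsPt mulgKV.
rewrite /orbit_prod Epi EpiV !mulgA -(mulgA _ a s) (mulgC a s) mulgA mulgK.
by congr (_ * _); rewrite [RHS]mulgC mulgA.
Qed.

Lemma orbit_prod_const a b : a != 1 -> b != 1 -> orbit_prod a = orbit_prod b.
Proof.
move=> na nb; have [->//|nab] := eqVneq a b.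
have nbaV : b * a^-1 != 1 by rewrite -eq_mulgV1 eq_sym.
by rewrite -(orbit_prodM nbaV na) ?mulgKV.
Qed.

Lemma orbit_prod_sqr x : x != 1 -> orbit_prod x ^+ 2 = 1.
Proof.
move=> nx; rewrite expgS expg1 {1}(@orbit_prod_const x x^-1) ?eq_invg1 //.
by rewrite orbit_prodV mulVg.
Qed.

End TriplePermutation.

Theorem lemma6p2 (gT : finGroupType) (pi : {perm gT})
  (Gab : abelian [set: gT])
  (pi1 : pi 1 = 1)
  (h3 : forall x : gT, x != 1 -> pi (pi (pi x)) = x)
  (hinv : forall x : gT, x != 1 -> (pi x)^-1 = (pi^-1)%g (x^-1))
  (hfun : forall s t : gT, s != 1 -> t != 1 -> s != t^-1 ->
            pi (s * t) = pi t * pi ((pi s)^-1 * pi (t^-1))) :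
  exists omega : gT,
    (forall s : gT, s != 1 -> s * pi s * (pi^-1)%g s = omega) /\ omega ^+ 2 = 1.
Proof.
have [s0 ns0 | all1] := pickP (fun x : gT => x != 1); last first.
  by exists 1; split=> [s|]; rewrite ?expg1n // (negbFE (all1 s)).
exists (orbit_prod pi s0); split=> [s ns|].
  exact: orbit_prod_const Gab pi1 h3 hinv hfun s s0 ns ns0.
exact: orbit_prod_sqr Gab pi1 h3 hinv hfun s0 ns0.
Qed.
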